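(* With $\tilde h_n(q)=q^{n(n-1)/2}h_n(q^{-1})$, one has, as formal power series in $s$, $$\sum_{n\ge0}\tilde h_n(q)s^n=\cfrac{1}{1-\cfrac{c_1 s}{1-\cfrac{c_2 s}{1-\cfrac{c_3 s}{1-\cdots}}}},$$ where $c_{2m-1}=\binom{m+1}{2}_q$ and $c_{2m}=q\binom{m+1}{2}_q$ for $m\ge1$; explicitly $$\sum_{n\ge 0}\tilde h_n(q)s^n=\cfrac{1}{1-\cfrac{s}{1-\cfrac{qs}{1-\cfrac{\binom{3}{2}_q s}{1-\cfrac{q\binom{3}{2}_q s}{1-\cfrac{\binom{4}{2}_q s}{1-\cfrac{q\binom{4}{2}_q s}{1-\cdots}}}}}}}.$$
   Context: Gaussian binomial coefficients: for $m\ge k\ge 0$, $\binom{m}{k}_q=\frac{[m]_q!}{[k]_q!\,[m-k]_q!}$ with $[m]_q!=\prod_{i=1}^m\frac{1-q^i}{1-q}$; set $\binom{m}{k}_q=0$ if $k>m$ or $k<0$. Let $W$ be an $n$-dimensional complex vector space with basis $w_1,\dots,w_n$, and $pr_k:W\to W$ the projection with $pr_k(\sum_i c_iw_i)=\sum_{i\ne k}c_iw_i$. The degenerate flag variety $\mathrm{Fl}^a_n$ is the variety of tuples $(V_1,\dots,V_{n-1})$ of subspaces of $W$ with $\dim V_k=k$ and $pr_{k+1}V_k\subset V_{k+1}$ for $k=1,\dots,n-2$. It admits a cellular decomposition into complex affine cells, so its Poincaré polynomial $P(t)$ involves only even powers of $t$; define $h_n(q)=P(q^{1/2})$, a polynomial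 of degree $n(n-1)/2$ with $h_0(q)=h_1(q)=1$. It is known (Cerulli Irelli–Feigin–Reineke) that $$h_n(q)=\sum_{f_1,\dots,f_{n-1}\ge 0} q^{\sum_{k=1}^{n-1}(k-f_k)(1-f_k+f_{k+1})}\prod_{k=1}^{n-1}\binom{1+f_{k-1}}{f_k}_{\!q}\prod_{k=1}^{n-1}\binom{1+f_{k+1}}{f_k}_{\!q},$$ with the convention $f_0=f_n=0$. *)

From HB Require Import structures.
From mathcomp Require Import all_boot all_order all_algebra.
Set Implicit Arguments. Unset Strict Implicit. Unset Printing Implicit Defensive.
Import Order.TTheory GRing.Theory Num.Theory.
Local Open Scope ring_scope.

Section Defs.
Variable F : fieldType.

Definition qint (x : F) (i : nat) : F := (1 - x ^+ i) / (1 - x).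

Definition qfact (x : F) (m : nat) : F := \prod_(1 <= i < m.+1) qint x i.

Definition gbin (x : F) (m k : nat) : F :=
  if (k <= m)%N then qfact x m / (qfact x k * qfact x (m - k)) else 0.

(* the sequence f_0, ..., f_n from f : 'I_(n-1) -> 'I_(n+1),
   f_k := f (k-1) for 1 <= k <= n-1, and f_0 = f_n = 0 *)
Definition fval (n : nat) (f : {ffun 'I_n.-1 -> 'I_n.+1}) (k : nat) : nat :=
  match k with
  | 0 => 0%N
  | k'.+1 => if @insub _ (fun i => i < n.-1)%N _ k' is Some i
             then nat_of_ord (f i) else 0%N
  end.

(* The Cerulli Irelli--Feigin--Reineke formula for h_n, evaluated at x.
   Only tuples with 0 <= f_k <= n contribute (others have a vanishing
   Gaussian binomial factor). *)
Definition hpoly (n : nat) (x : F) : F :=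
  \sum_(f : {ffun 'I_n.-1 -> 'I_n.+1})
    x ^ (\sum_(1 <= k < n)
           ((k%:Z - (fval f k)%:Z) * (1 - (fval f k)%:Z + (fval f k.+1)%:Z)))%R
    * \prod_(1 <= k < n) gbin x (1 + fval f k.-1) (fval f k)
    * \prod_(1 <= k < n) gbin x (1 + fval f k.+1) (fval f k).

Definition htilde (n : nat) (x : F) : F :=
  x ^+ ((n * n.-1) %/ 2) * hpoly n x^-1.

Definition ps := nat -> F.
Definition ps_one : ps := fun n => (n == 0%N)%:R.
Definition ps_mul (f g : ps) : ps := fun n => \sum_(i < n.+1) f i * g (n - i)%N.
Definition ps_pow (f : ps) (k : nat) : ps := iter k (ps_mul f) ps_one.
(* multiplication by c * s *)
Definition ps_cs (c : F) (f : ps) : ps :=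
  fun n => if n is n'.+1 then c * f n' else 0.
(* 1 / (1 - g) for g with zero constant term: sum_k g^k *)
Definition ps_geom (g : ps) : ps := fun n => \sum_(k < n.+1) ps_pow g k n.

Definition cfcoef (x : F) (j : nat) : F :=
  if odd j then gbin x ((j.+1)./2).+1 2 else x * gbin x ((j./2).+1) 2.

(* depth-d truncation of  1/(1 - c_k s/(1 - c_{k+1} s/(1 - ...))),
   the tail below depth d being replaced by 1 *)
Fixpoint cf (x : F) (k d : nat) : ps :=
  match d with
  | 0 => ps_one
  | d'.+1 => ps_geom (ps_cs (cfcoef x k) (cf x k.+1 d'))
  end.

End Defs.

Definition qvar : {fraction {poly int}} := FracField.tofrac 'X.

From Pilot Require Import Defs.
From HB Require Import structures.
From mathcomp Require Import all_boot all_order all_algebra.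
From mathcomp Require Import zify ring.
Import Order.TTheory GRing.Theory Num.Theory.
Local Open Scope ring_scope.
Set Implicit Arguments. Unset Strict Implicit. Unset Printing Implicit Defensive.

(* Read through the Cerulli Irelli--Feigin--Reineke (CFR) formula, htilde_(m+1)(q) is a sum over height
   sequences 0 = f_0, f_1, ..., f_m, f_(m+1) = 0.  Substituting q -> 1/q in
   the Gaussian binomials and multiplying by q^(m(m+1)/2), each term becomes
   a product of weights of the individual steps f_k -> f_(k+1), up to a power
   of q that telescopes along the walk.  The step weights vanish unless
   |f_k - f_(k+1)| <= 1, and they are exactly the entries of the tridiagonal
   (Jacobi) matrix obtained by contracting the S-fraction.  Hence both sides
   are generating functions of the same weighted Motzkin walks. *)

Definition fcons (T : Type) m (t : T) (g : {ffun 'I_m -> T}) : {ffun 'I_m.+1 -> T} :=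
  [ffun i : 'I_m.+1 => if unlift ord0 i is Some j then g j else t].

Lemma sum_ffunS (T : finType) (R : nmodType) m (G : {ffun 'I_m.+1 -> T} -> R) :
  \sum_(f : {ffun 'I_m.+1 -> T}) G f =
  \sum_(t : T) \sum_(g : {ffun 'I_m -> T}) G (fcons t g).
Proof.
rewrite pair_big (reindex (fun p : T * {ffun 'I_m -> T} => fcons p.1 p.2)) //=.
apply: onW_bij.
exists (fun f : {ffun 'I_m.+1 -> T} => (f ord0, [ffun j => f (lift ord0 j)])).
  move=> [t g] /=; congr pair; first by rewrite ffunE unlift_none.
  by apply/ffunP => j; rewrite !ffunE liftK.
move=> f; apply/ffunP => i; rewrite !ffunE /=.
by case: unliftP => [j ->|->] //; rewrite ffunE.
Qed.

(* The walk a, f_0, ..., f_(m-1), 0, 0, ... : it starts at height a, visits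
   the heights listed by f and ends at height 0 at time m+1. *)
Definition walk m K (a : nat) (f : {ffun 'I_m -> 'I_K}) (k : nat) : nat :=
  match k with
  | 0 => a
  | k'.+1 => if @insub _ (fun i => i < m)%N _ k' is Some i then nat_of_ord (f i) else 0%N
  end.

Lemma walk_fcons m K a (t : 'I_K) (g : {ffun 'I_m -> 'I_K}) k :
  walk a (fcons t g) k.+1 = walk t g k.
Proof.
case: k => [|j] /=.
  case: insubP => [u _ hu|] //.
  by rewrite ffunE (_ : u = ord0) ?unlift_none //; apply/val_inj.
case: insubP => [u hj hu|hj]; case: insubP => [v hj' hv|hj'] //=.
- rewrite ffunE (_ : u = lift ord0 v) ?liftK //.
  by apply/val_inj; rewrite /= hu hv.
- by move: hj'; rewrite -ltnS hj.
- by move: hj; rewrite ltnS hj'.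
Qed.

Lemma walk_end m K a (f : {ffun 'I_m -> 'I_K}) : walk a f m.+1 = 0%N.
Proof. by rewrite /= insubF // ltnn. Qed.

Section Transfer.
Variable R : pzSemiRingType.
Variable V : nat -> nat -> R.

(* Total weight of the walks with m steps from height a to height 0 that stay
   within the heights 0..H: the a-th entry of (V^m e_0), V truncated to H. *)
Fixpoint walk_weight (H m a : nat) : R :=
  match m with
  | 0 => (a == 0)%:R
  | m'.+1 => \sum_(b < H.+1) V a b * walk_weight H m' b
  end.

Lemma sum_walks H m a :
  \sum_(f : {ffun 'I_m -> 'I_H.+1}) \prod_(k < m.+1) V (walk a f k) (walk a f k.+1)
  = walk_weight H m.+1 a.
Proof.
elim: m a => [|m IH] a.
  have step0 (f : {ffun 'I_0 -> 'I_H.+1}) :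
      \prod_(k < 1) V (walk a f k) (walk a f k.+1) = V a 0.
    by rewrite big_ord_recl big_ord0 mulr1 /=; case: insubP.
  rewrite (eq_bigr _ (fun f _ => step0 f)) sumr_const card_ffun !card_ord expn0.
  by rewrite /= big_ord_recl /= mulr1 big1 ?addr0 // => i _; rewrite mulr0.
rewrite sum_ffunS.
change (walk_weight H m.+2 a) with (\sum_(b < H.+1) V a b * walk_weight H m.+1 b).
apply: eq_bigr => t _.
under eq_bigr do rewrite big_ord_recl.
rewrite -IH mulr_sumr; apply: eq_bigr => g _.
rewrite (walk_fcons a t g 0); congr (_ * _); apply: eq_bigr => k _.
by rewrite !walk_fcons.
Qed.

End Transfer.

Section VanishBelow.
Variable R : comNzRingType.
Variable M : nat.

(* Congruences of
   power series modulo X^M are stated as vanish_below (p - q); the predicate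
   is an ideal, which lets `ring` combine such congruences. *)
Definition vanish_below (p : {poly R}) := forall i, (i < M)%N -> p`_i = 0.

Lemma vanishD p q : vanish_below p -> vanish_below q -> vanish_below (p + q).
Proof. by move=> hp hq i hi; rewrite coefD hp ?hq ?addr0. Qed.

Lemma vanishN p : vanish_below p -> vanish_below (- p).
Proof. by move=> hp i hi; rewrite coefN hp ?oppr0. Qed.

Lemma vanishMl p q : vanish_below p -> vanish_below (q * p).
Proof.
move=> hp i hi; rewrite coefM big1 // => j _; rewrite hp ?mulr0 //.
exact: leq_ltn_trans (leq_subr _ _) hi.
Qed.

Lemma vanishMr p q : vanish_below p -> vanish_below (p * q).
Proof. by rewrite mulrC; apply: vanishMl. Qed.

Lemma vanish_eq p q : p = q -> vanish_below p -> vanish_below q.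
Proof. by move=> ->. Qed.

Lemma vanish_coef p q : vanish_below (p - q) -> forall i, (i < M)%N -> p`_i = q`_i.
Proof. by move=> h i hi; apply/eqP; rewrite -subr_eq0 -coefB; apply/eqP/h. Qed.

Lemma coef_pow_low (P : {poly R}) k i : P`_0 = 0 -> (i < k)%N -> (P ^+ k)`_i = 0.
Proof.
move=> P0; elim: k i => [|k IH] i //= hi.
rewrite exprS coefM big1 // => -[[|j] hj] _ /=; first by rewrite P0 mul0r.
by rewrite IH ?mulr0 //; lia.
Qed.

Lemma geom_sum_rec (P : {poly R}) : P`_0 = 0 -> (0 < M)%N ->
  vanish_below (\sum_(k < M) P ^+ k - (1 + P * \sum_(k < M) P ^+ k)).
Proof.
move=> P0 hM; have [M' eM] : exists M', M = M'.+1 by exists M.-1; rewrite prednK.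
rewrite eM.
have sumS_l : \sum_(k < M'.+1) P ^+ k = 1 + P * \sum_(k < M') P ^+ k.
  rewrite big_ord_recl expr0 mulr_sumr; congr (_ + _).
  by apply: eq_bigr => k _; rewrite exprS.
apply: (vanish_eq (p := - P ^+ M'.+1)).
  by rewrite {1}sumS_l big_ord_recr /= exprS; ring.
by apply/vanishN => i hi; apply: coef_pow_low => //; rewrite -eM.
Qed.

End VanishBelow.

Section Truncation.
Variable F : fieldType.
Variable M : nat.
Local Notation vanish := (vanish_below M).

(* The polynomial of the first M coefficients of a power series; the series
   operations of Defs become polynomial operations modulo X^M. *)
Definition trunc (f : ps F) : {poly F} := \poly_(i < M) f i.

Lemma coef_trunc f i : (i < M)%N -> (trunc f)`_i = f i.
Proof. by move=> hi; rewrite coef_poly hi. Qed.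

Lemma trunc_mul f g : vanish (trunc (ps_mul f g) - trunc f * trunc g).
Proof.
move=> i hi; rewrite coefB coef_trunc // coefM; apply/eqP; rewrite subr_eq0; apply/eqP.
apply: eq_bigr => j _; rewrite !coef_trunc //.
  exact: leq_ltn_trans (leq_subr _ _) hi.
by apply: leq_ltn_trans hi; rewrite -ltnS.
Qed.

Lemma trunc_cs c f : vanish (trunc (ps_cs c f) - c%:P * 'X * trunc f).
Proof.
move=> i hi; rewrite coefB coef_trunc // -mulrA coefCM coefXM.
case: i hi => [|i] hi /=; first by rewrite mulr0 subr0.
by rewrite coef_trunc ?subrr //; apply: ltnW.
Qed.

Lemma trunc_one : (0 < M)%N -> vanish (trunc (ps_one F) - 1).
Proof. by move=> hM i hi; rewrite coefB coef_trunc // coef1 subrr. Qed.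

Lemma trunc_pow g k : vanish (trunc (ps_pow g k) - trunc g ^+ k).
Proof.
elim: k => [|k IH] i hi; first by rewrite expr0 coefB coef_trunc // coef1 subrr.
change (ps_pow g k.+1) with (ps_mul g (ps_pow g k)).
rewrite coefB (vanish_coef (trunc_mul g (ps_pow g k)) hi) exprS -coefB -mulrBr.
exact: (vanishMl _ IH).
Qed.

Lemma trunc_geom g : g 0%N = 0 ->
  vanish (trunc (ps_geom g) - \sum_(k < M) trunc g ^+ k).
Proof.
move=> g0 i hi; rewrite coefB coef_trunc // coef_sum /ps_geom.
have P0 : (trunc g)`_0 = 0 by rewrite coef_trunc //; apply: leq_ltn_trans hi.
under eq_bigr do rewrite -(coef_trunc _ hi) (vanish_coef (trunc_pow g _) hi).
rewrite (big_ord_widen_cond M xpredT (fun k => (trunc g ^+ k)`_i) hi) /=.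
rewrite [X in _ - X](bigID (fun k : 'I_M => (k < i.+1)%N)) /=.
rewrite [X in _ - (_ + X)]big1 ?addr0 ?subrr // => k.
by rewrite -leqNgt; apply: coef_pow_low.
Qed.

Lemma trunc_geom_rec g : g 0%N = 0 -> (0 < M)%N ->
  vanish (trunc (ps_geom g) - (1 + trunc g * trunc (ps_geom g))).
Proof.
move=> g0 hM.
have P0 : (trunc g)`_0 = 0 by rewrite coef_trunc.
set G := trunc (ps_geom g); set S := \sum_(k < M) trunc g ^+ k.
apply: (vanish_eq (p := (G - S) + (S - (1 + trunc g * S)) - trunc g * (G - S))).
  by rewrite /S; ring.
apply: vanishD; last by apply/vanishN/vanishMl/trunc_geom.
by apply: vanishD; [apply: trunc_geom | apply: geom_sum_rec].
Qed.

End Truncation.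

(* c_0 = 0, so a fraction may start at c_0 instead of c_1. *)
Lemma cfcoef0 (F : fieldType) (x : F) : cfcoef x 0 = 0.
Proof. by rewrite /cfcoef /gbin /= mulr0. Qed.

Lemma sum_if_eq (R : nmodType) n j (K : R) :
  \sum_(b < n) (if b == j :> nat then K else 0) = if (j < n)%N then K else 0.
Proof. by rewrite -big_mkcond (big_ord1_eq _ (fun _ => K)). Qed.

Section Contraction.
Variable F : fieldType.
Variable x : F.
Variables H M : nat.
Hypothesis M_gt0 : (0 < M)%N.
Local Notation c := (cfcoef x).
Local Notation vanish := (vanish_below M).

(* Truncation modulo X^M of the tail 1/(1 - c_k s/(1 - c_(k+1) s/ ...)) of the
   fraction of depth 2H+2 started at c_0 = 0. *)
Definition tail k := trunc M (cf x k (H.*2.+2 - k)).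

Lemma tail_rec k : (k < H.*2.+2)%N ->
  vanish (tail k - (1 + (c k)%:P * 'X * tail k.+1 * tail k)).
Proof.
move=> hk; rewrite /tail -(subnSK hk).
set U := cf x k.+1 _; set G := trunc M (cf x k _).
have geomU := trunc_geom_rec (M := M) (g := ps_cs (c k) U) (erefl _) M_gt0.
apply: (vanish_eq (p := (G - (1 + trunc M (ps_cs (c k) U) * G))
  + (trunc M (ps_cs (c k) U) - (c k)%:P * 'X * trunc M U) * G)); first by ring.
by apply: vanishD => //; apply/vanishMr/trunc_cs.
Qed.

Lemma tail_bottom : vanish (tail H.*2.+2 - 1).
Proof. by rewrite /tail subnn; apply: trunc_one. Qed.

Lemma tail0 : vanish (tail 0 - 1).
Proof.
by have := tail_rec (ltn0Sn _); rewrite cfcoef0 polyC0 !mul0r addr0.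
Qed.

(* Even contraction: J_a = t_(2a) t_(2a+1) are the tails of the associated
   Jacobi-type fraction with level weights c_(2a) + c_(2a+1) and
   up-down weights c_(2a+1) c_(2a+2), the fraction stopping at level H. *)
Definition jtail a := tail a.*2 * tail a.*2.+1.
Definition up_coef a := c a.*2.+2 * (a < H)%:R.

Lemma jtail_rec a : (a <= H)%N ->
  vanish (jtail a - (1 + 'X * (c a.*2 + c a.*2.+1)%:P * jtail a
                    + 'X ^+ 2 * (c a.*2.+1 * up_coef a)%:P * jtail a.+1 * jtail a)).
Proof.
move=> ha.
set A := tail a.*2; set B := tail a.*2.+1; set C := tail a.*2.+2; set D := tail a.*2.+3.
have eA : vanish (A - (1 + (c a.*2)%:P * 'X * B * A)) by apply: tail_rec; lia.
have eB : vanish (B - (1 + (c a.*2.+1)%:P * 'X * C * B)) by apply: tail_rec; lia.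
have eC : vanish (C - (1 + (up_coef a)%:P * 'X * D * C)).
  rewrite /up_coef; case: ltnP => hH; first by rewrite mulr1; apply: tail_rec; lia.
  rewrite mulr0 polyC0 !mul0r addr0 /C (_ : a.*2.+2 = H.*2.+2); last by lia.
  exact: tail_bottom.
rewrite /jtail doubleS -/A -/B -/C -/D.
apply: (vanish_eq (p := (A - (1 + (c a.*2)%:P * 'X * B * A))
   + A * (B - (1 + (c a.*2.+1)%:P * 'X * C * B))
   + (c a.*2.+1)%:P * 'X * A * B * (C - (1 + (up_coef a)%:P * 'X * D * C)))).
  by rewrite !rmorphD !rmorphM /=; ring.
by apply: vanishD; [apply: vanishD => //; apply: vanishMl | apply: vanishMl].
Qed.

(* Series of the walks from level a to level 0, split at the last visit to
   level a: D_0 = J_0 and D_(a+1) = J_(a+1) X c_(2a+1) D_a. *)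
Fixpoint descent a : {poly F} :=
  if a is a'.+1 then jtail a * ('X * (c a'.*2.+1)%:P * descent a') else jtail 0.

Definition descent_step a : {poly F} :=
  if a is a'.+1 then 'X * (c a'.*2.+1)%:P * descent a' else 1.

Lemma descentE a : descent a = jtail a * descent_step a.
Proof. by case: a => [|a] /=; rewrite ?mulr1. Qed.

Variable V : nat -> nat -> F.
Hypothesis V_up : forall a, V a a.+1 = c a.*2.+2.
Hypothesis V_down : forall a, V a.+1 a = c a.*2.+1.
Hypothesis V_level : forall a, V a a = c a.*2 + c a.*2.+1.
Hypothesis V_far : forall a b, (a.+1 < b)%N || (b.+1 < a)%N -> V a b = 0.

Lemma V_tridiag a b (G : nat -> {poly F}) : (V a b)%:P * G b =
  (if b == a.+1 then (V a a.+1)%:P * G a.+1 else 0) +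
  (if b == a then (V a a)%:P * G a else 0) +
  (if b.+1 == a then (V a a.-1)%:P * G a.-1 else 0).
Proof.
have [hab|hab] := boolP ((a.+1 < b) || (b.+1 < a))%N.
  rewrite V_far // polyC0 mul0r.
  have [-> -> ->] : [/\ b == a.+1 = false, b == a = false & b.+1 == a = false].
    by split; lia.
  by rewrite !addr0.
have : b = a.+1 \/ b = a \/ b.+1 = a by lia.
case=> [->|[->|<-]].
- have [-> ->] : a.+1 == a = false /\ a.+2 == a = false by split; lia.
  by rewrite eqxx !addr0.
- have [-> ->] : a == a.+1 = false /\ a.+1 == a = false by split; lia.
  by rewrite eqxx add0r addr0.
- have [-> ->] : b == b.+2 = false /\ b == b.+1 = false by split; lia.
  by rewrite eqxx !add0r.
Qed.

(* The first step of a walk from level a <= H; the step up is excluded at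
   the top level H, where up_coef vanishes. *)
Lemma sum_steps a (G : nat -> {poly F}) : (a <= H)%N ->
  \sum_(b < H.+1) (V a b)%:P * G b =
  (up_coef a)%:P * G a.+1 + (c a.*2 + c a.*2.+1)%:P * G a +
  (if a is a'.+1 then (c a'.*2.+1)%:P * G a' else 0).
Proof.
move=> ha; under eq_bigr do rewrite (V_tridiag a _ G).
rewrite !big_split /= !sum_if_eq !ltnS ha V_level /up_coef; congr (_ + _ + _).
  by case: (a < H)%N; rewrite ?mulr1 ?mulr0 ?polyC0 ?mul0r ?V_up.
case: a ha => [|a] ha /=; first by rewrite big1 // => b _; case: ifP.
by rewrite sum_if_eq ltnS ltnW // V_down.
Qed.

Lemma descent_rec a : (a <= H)%N ->
  vanish (descent a - ((a == 0)%:R%:P + 'X * \sum_(b < H.+1) (V a b)%:P * descent b)).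
Proof.
move=> ha; rewrite sum_steps //.
have eR : (a == 0)%:R%:P + 'X * (if a is a'.+1 then (c a'.*2.+1)%:P * descent a' else 0)
          = descent_step a.
  by case: a {ha} => [|a] /=; rewrite ?mulr0 ?addr0 ?add0r ?mulrA.
rewrite [descent a.+1]/= [descent a]descentE.
apply: (vanish_eq (p := descent_step a * (jtail a - (1 + 'X * (c a.*2 + c a.*2.+1)%:P * jtail a
               + 'X ^+ 2 * (c a.*2.+1 * up_coef a)%:P * jtail a.+1 * jtail a)))).
  by rewrite -eR rmorphM /=; ring.
by apply/vanishMl/jtail_rec.
Qed.

Lemma linear_system_coef (Y : nat -> {poly F}) :
  (forall a, (a <= H)%N ->
     vanish (Y a - ((a == 0)%:R%:P + 'X * \sum_(b < H.+1) (V a b)%:P * Y b))) ->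
  forall i, (i < M)%N -> forall a, (a <= H)%N -> (Y a)`_i = walk_weight V H i a.
Proof.
move=> hY; elim=> [|i IH] hi a ha; rewrite (vanish_coef (hY a ha) hi) coefD coefC coefXM /=.
  by rewrite addr0.
rewrite add0r coef_sum; apply: eq_bigr => b _; rewrite coefCM IH //.
  exact: ltnW.
by rewrite -ltnS.
Qed.

Lemma cf_walk_weight i : (i < M)%N -> cf x 1 H.*2.+1 i = walk_weight V H i 0.
Proof.
move=> hi; rewrite -(linear_system_coef descent_rec) //.
have D0 : vanish (descent 0 - tail 1).
  by rewrite /= /jtail -[X in _ - X]mul1r -mulrBl; apply/vanishMr/tail0.
by rewrite (vanish_coef D0 hi) /tail coef_trunc // subSS subn0.
Qed.

End Contraction.

Section Stabilization.
Variable F : fieldType.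

Lemma ps_pow_ext (g1 g2 : ps F) i : (forall j, (j <= i)%N -> g1 j = g2 j) ->
  forall k j, (j <= i)%N -> ps_pow g1 k j = ps_pow g2 k j.
Proof.
move=> hg; elim=> [|k IH] j hj //.
change (ps_mul g1 (ps_pow g1 k) j = ps_mul g2 (ps_pow g2 k) j).
by apply: eq_bigr => l _; have hl := ltn_ord l; rewrite hg ?IH //; lia.
Qed.

Lemma ps_geom_ext (g1 g2 : ps F) i : (forall j, (j <= i)%N -> g1 j = g2 j) ->
  ps_geom g1 i = ps_geom g2 i.
Proof. by move=> hg; apply: eq_bigr => k _; apply: (ps_pow_ext hg). Qed.

Lemma cf_stable (x : F) n : forall k d1 d2, (n < d1)%N -> (n < d2)%N ->
  forall i, (i <= n)%N -> cf x k d1 i = cf x k d2 i.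
Proof.
elim: n => [|n IH] k [|d1] [|d2] // h1 h2 i hi;
  apply: ps_geom_ext => -[|j] hj //=; first by lia.
by congr (_ * _); apply: IH => //; lia.
Qed.

End Stabilization.

Lemma bin2S a : 'C(a.+1, 2) = ('C(a, 2) + a)%N.
Proof. by rewrite binS bin1. Qed.

Lemma bin2D a b : 'C(a + b, 2) = ('C(a, 2) + 'C(b, 2) + a * b)%N.
Proof.
elim: b => [|b IH]; first by rewrite addn0 bin0n muln0 !addn0.
by rewrite addnS !bin2S IH; lia.
Qed.

Section GaussianBinomial.
Variable F : fieldType.

(* y is not a nontrivial root of unity, so that all q-integers [i]_y, i > 0,
   are invertible. *)
Definition qgeneric (y : F) := forall i, (0 < i)%N -> 1 - y ^+ i != 0.

Variable y : F.
Hypothesis y_generic : qgeneric y.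

Lemma qint_neq0 i : (0 < i)%N -> qint y i != 0.
Proof.
by move=> hi; rewrite /qint mulf_eq0 negb_or y_generic // invr_eq0 -(expr1 y) y_generic.
Qed.

Lemma qint1 : qint y 1 = 1.
Proof. by rewrite /qint expr1 divff // -(expr1 y) y_generic. Qed.

Lemma qfact0 : qfact y 0 = 1.
Proof. by rewrite /qfact big_geq. Qed.

Lemma qfactS m : qfact y m.+1 = qfact y m * qint y m.+1.
Proof. by rewrite /qfact big_nat_recr. Qed.

Lemma qfact_neq0 m : qfact y m != 0.
Proof.
elim: m => [|m IH]; first by rewrite qfact0 oner_eq0.
by rewrite qfactS mulf_neq0 // qint_neq0.
Qed.

Lemma gbin_gt m k : (m < k)%N -> gbin y m k = 0.
Proof. by move=> h; rewrite /gbin leqNgt h. Qed.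

Lemma gbin_nn m : gbin y m m = 1.
Proof. by rewrite /gbin leqnn subnn qfact0 mulr1 divff // qfact_neq0. Qed.

Lemma gbin_n0 m : gbin y m 0 = 1.
Proof. by rewrite /gbin subn0 qfact0 mul1r divff // qfact_neq0. Qed.

Lemma gbin_Sn m : gbin y m.+1 m = qint y m.+1.
Proof.
rewrite /gbin leqnSn subSnn qfactS /qfact big_nat1 qint1 mulr1 -/(qfact y m).
by rewrite mulrC mulKf // qfact_neq0.
Qed.

Lemma gbin_SSn m : gbin y m.+2 m = qint y m.+2 * qint y m.+1 / qint y 2.
Proof.
rewrite /gbin (leq_trans (leqnSn m) (leqnSn _)) (_ : (m.+2 - m = 2)%N); last by lia.
rewrite !qfactS qfact0 mul1r qint1 mul1r.
by field; rewrite qfact_neq0 qint_neq0.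
Qed.

Lemma gbin_SS2 m : gbin y m.+2 2 = gbin y m.+2 m.
Proof.
rewrite /gbin; have [-> -> -> ->] : [/\ (2 <= m.+2)%N, (m <= m.+2)%N, (m.+2 - 2 = m)%N & (m.+2 - m = 2)%N].
  by split; lia.
by rewrite [qfact y 2 * _]mulrC.
Qed.

End GaussianBinomial.

Section Inversion.
Variable F : fieldType.
Variable x : F.
Hypothesis x_neq0 : x != 0.
Hypothesis x_generic : qgeneric x.

Lemma qgenericV : qgeneric x^-1.
Proof.
move=> i hi; have hz : x ^+ i != 0 by rewrite expf_neq0.
rewrite exprVn (_ : 1 - (x ^+ i)^-1 = - (1 - x ^+ i) / x ^+ i); last by field.
by rewrite mulf_neq0 ?oppr_eq0 ?x_generic ?invr_eq0.
Qed.

Lemma qint_inv i : qint x^-1 i = x^-1 ^+ i.-1 * qint x i.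
Proof.
case: i => [|i]; first by rewrite /qint !expr0 subrr !mul0r mulr0.
have h1 : 1 - x != 0 by rewrite -(expr1 x) x_generic.
have h3 : x - 1 != 0 by rewrite -oppr_eq0 opprB.
rewrite /qint /= !exprVn exprS invfM; field.
by rewrite expf_neq0 // x_neq0 h1 h3.
Qed.

Lemma qfact_inv m : qfact x^-1 m = x^-1 ^+ 'C(m, 2) * qfact x m.
Proof.
elim: m => [|m IH]; first by rewrite !qfact0 bin0n expr0 mulr1.
by rewrite !qfactS IH qint_inv bin2S exprD /=; ring.
Qed.

Lemma gbin_inv m k : gbin x^-1 m k = x^-1 ^+ (k * (m - k)) * gbin x m k.
Proof.
have [hk|hk] := leqP k m; last by rewrite !gbin_gt // mulr0.
rewrite /gbin hk !qfact_inv -(subnKC hk) bin2D addKn !exprD.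
by field; rewrite !qfact_neq0 ?expf_neq0 ?invr_eq0.
Qed.

End Inversion.

Section StepWeights.
Variable F : fieldType.
Variable x : F.
Hypothesis x_generic : qgeneric x.
Local Notation c := (cfcoef x).

Lemma cfcoef_even a : c a.*2 = x * gbin x a.+1 2.
Proof. by rewrite /cfcoef odd_double half_double. Qed.

Lemma cfcoef_odd a : c a.*2.+1 = gbin x a.+2 2.
Proof. by rewrite /cfcoef /= odd_double half_double. Qed.

Definition step_weight a b := x ^+ (b == a.+1) * (gbin x a.+1 b * gbin x b.+1 a).

Lemma step_weight_up a : step_weight a a.+1 = c a.*2.+2.
Proof.
by rewrite /step_weight eqxx expr1 gbin_nn // mul1r -doubleS cfcoef_even gbin_SS2.
Qed.

Lemma step_weight_down a : step_weight a.+1 a = c a.*2.+1.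
Proof.
by rewrite /step_weight (ltn_eqF (leqnSn a.+1)) expr0 mul1r gbin_nn // mulr1 cfcoef_odd gbin_SS2.
Qed.

(* [a+1]_x^2 = x [a+1 choose 2]_x + [a+2 choose 2]_x. *)
Lemma step_weight_level a : step_weight a a = c a.*2 + c a.*2.+1.
Proof.
rewrite /step_weight (ltn_eqF (ltnSn a)) expr0 mul1r gbin_Sn // cfcoef_even cfcoef_odd.
case: a => [|a]; first by rewrite gbin_gt // mulr0 add0r gbin_nn // qint1 // mulr1.
have h1 : 1 - x != 0 by rewrite -(expr1 x) x_generic.
have h2 : 1 - x * x != 0 by rewrite -expr2 x_generic.
rewrite !gbin_SS2 !gbin_SSn // /qint !exprS expr0 mulr1.
by field; rewrite h1 h2.
Qed.

Lemma step_weight_far a b : (a.+1 < b)%N || (b.+1 < a)%N -> step_weight a b = 0.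
Proof.
case/orP => h; rewrite /step_weight; first by rewrite (gbin_gt x h) mul0r mulr0.
by rewrite (@gbin_gt _ x b.+1 a h) !mulr0.
Qed.

End StepWeights.

(* The exponent of q contributed by index k to a term of the CFR formula. *)
Definition cfr_exponent k a b : int := (k%:Z - a%:Z) * (1 - a%:Z + b%:Z).

(* A potential on (time, height) whose increments absorb the exponents. *)
Definition potential k a : int := (k * a)%:Z - ('C(a, 2))%:Z.

(* For neighbouring heights, the q-exponents of a step after inversion are
   the increment of the potential, plus 1 for a step up. *)
Lemma exponent_identity k a b : (b <= a.+1)%N -> (a <= b.+1)%N ->
  k%:Z - cfr_exponent k a b - (b * (a.+1 - b))%N%:Z - (a * (b.+1 - a))%N%:Z
  = potential k a - potential k.+1 b + (b == a.+1)%N%:Z.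
Proof.
move=> hb ha; rewrite /potential /cfr_exponent.
have : b = a.+1 \/ b = a \/ b.+1 = a by lia.
case=> [->|[->|<-]].
- have [-> ->] : a.+1 == a.+1 /\ (a.+2 - a = 2)%N by split; lia.
  by rewrite subnn muln0 bin2S; lia.
- have [-> ->] : a == a.+1 = false /\ (a.+1 - a = 1)%N by split; lia.
  lia.
- have [-> ->] : b == b.+2 = false /\ (b.+2 - b = 2)%N by split; lia.
  by rewrite subnn muln0 bin2S; lia.
Qed.

Section WalkModel.
Variable F : fieldType.
Variable x : F.
Hypothesis x_neq0 : x != 0.
Hypothesis x_generic : qgeneric x.

Lemma step_weight_inv k a b :
  x ^+ k * x^-1 ^ cfr_exponent k a b * (gbin x^-1 a.+1 b * gbin x^-1 b.+1 a)
  = x ^ (potential k a - potential k.+1 b) * step_weight x a b.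
Proof.
have [far|/norP[]] := boolP ((a.+1 < b) || (b.+1 < a))%N.
  rewrite step_weight_far // mulr0.
  by case/orP: far => h; rewrite (gbin_gt _ h) ?mul0r ?mulr0.
rewrite -!leqNgt => hb ha.
rewrite !gbin_inv // !exprVn !exprnN exprz_inv (exprnP x k) /step_weight.
rewrite (exprnP x (b == a.+1)) [RHS]mulrA -expfzDr // -exponent_identity //.
by rewrite !expfzDr //; ring.
Qed.

(* The CFR term of a height sequence g with g_0 = g_(m+1) = 0, after the
   substitution q -> 1/q and multiplication by q^(m(m+1)/2), is the product
   of the step weights along g: the potentials telescope. *)
Lemma cfr_term_inv m (g : nat -> nat) : g 0%N = 0%N -> g m.+1 = 0%N ->
  x ^+ ((m.+1 * m) %/ 2)
  * (x^-1 ^ (\sum_(1 <= k < m.+1) cfr_exponent k (g k) (g k.+1))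
     * \prod_(1 <= k < m.+1) gbin x^-1 (1 + g k.-1) (g k)
     * \prod_(1 <= k < m.+1) gbin x^-1 (1 + g k.+1) (g k))
  = \prod_(k < m.+1) step_weight x (g k) (g k.+1).
Proof.
move=> g0 gm; have xV_neq0 : x^-1 != 0 by rewrite invr_eq0.
have xV_generic := qgenericV x_neq0 x_generic.
have triangle : x ^+ ((m.+1 * m) %/ 2) = \prod_(k < m.+1) x ^+ k.
  rewrite divn2 -bin2 -bin2_sum big_mkord.
  by rewrite (big_morph (fun n => x ^+ n) (exprD x) (expr0 x)).
have exps : x^-1 ^ (\sum_(1 <= k < m.+1) cfr_exponent k (g k) (g k.+1))
          = \prod_(k < m.+1) x^-1 ^ cfr_exponent k (g k) (g k.+1).
  rewrite (big_morph (fun z : int => x^-1 ^ z) (fun a b => expfzDr a b xV_neq0) (expr0z _)).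
  rewrite -(big_mkord xpredT (fun k => x^-1 ^ cfr_exponent k (g k) (g k.+1))).
  by rewrite [RHS]big_ltn // g0 /cfr_exponent mul0r expr0z mul1r.
have below : \prod_(1 <= k < m.+1) gbin x^-1 (1 + g k.-1) (g k)
           = \prod_(k < m.+1) gbin x^-1 (g k).+1 (g k.+1).
  rewrite big_add1 /= -(big_mkord xpredT (fun k => gbin x^-1 (g k).+1 (g k.+1))).
  by rewrite big_nat_recr // gm (gbin_n0 xV_generic) Monoid.mulm1; apply: eq_bigr.
have above : \prod_(1 <= k < m.+1) gbin x^-1 (1 + g k.+1) (g k)
           = \prod_(k < m.+1) gbin x^-1 (g k.+1).+1 (g k).
  rewrite -(big_mkord xpredT (fun k => gbin x^-1 (g k.+1).+1 (g k))).
  by rewrite [RHS]big_ltn // g0 (gbin_n0 xV_generic) mul1r.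
rewrite triangle exps below above -!big_split /=.
under eq_bigr do rewrite !mulrA -mulrA step_weight_inv.
rewrite big_split /= -(big_morph (fun z : int => x ^ z) (fun a b => expfzDr a b x_neq0) (expr0z _)).
rewrite -(big_mkord xpredT (fun k => potential k (g k) - potential k.+1 (g k.+1))).
rewrite (telescope_sumr_eq (fun k => - potential k (g k))) //; last first.
  by move=> k _; rewrite opprK addrC.
by rewrite g0 gm /potential !muln0 bin0n subrr expr0z mul1r.
Qed.

Lemma htilde_walks m : htilde m.+1 x =
  \sum_(f : {ffun 'I_m -> 'I_m.+2})
    \prod_(k < m.+1) step_weight x (walk 0 f k) (walk 0 f k.+1).
Proof.
rewrite /htilde /hpoly mulr_sumr; apply: eq_bigr => f _.
exact: (cfr_term_inv (g := walk 0 f) erefl (walk_end 0 f)).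
Qed.

End WalkModel.

Lemma htilde0 (F : fieldType) (x : F) : htilde 0 x = 1.
Proof.
rewrite /htilde /hpoly expr0 mul1r (eq_bigr (fun _ => 1)).
  by rewrite sumr_const card_ffun !card_ord expn0.
by move=> f _; rewrite !big_geq // expr0z !mulr1.
Qed.

Lemma qvar_neq0 : qvar != 0.
Proof.
rewrite /qvar -(rmorph0 (@tofrac _)) tofrac_eq.
by apply/eqP => /(congr1 (fun p : {poly int} => p`_1)); rewrite coefX coef0.
Qed.

Lemma qvar_generic : qgeneric qvar.
Proof.
move=> i hi; rewrite /qvar -rmorphXn -(rmorph1 (@tofrac _)) -rmorphB /=.
rewrite -(rmorph0 (@tofrac _)) tofrac_eq.
apply/eqP => /(congr1 (fun p : {poly int} => p`_i)).
rewrite coefB coef1 coefXn eqxx coef0 (_ : i == 0%N = false); last by lia.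
by move/eqP; rewrite sub0r oppr_eq0 oner_eq0.
Qed.

Theorem mainTheorem3 :
  forall n : nat, exists N0 : nat, forall N : nat, (N0 <= N)%N ->
    cf qvar 1 N n = htilde n qvar.
Proof.
move=> n; exists n.+1 => N hN.
have [q0 qg] := (qvar_neq0, qvar_generic).
(* Past depth n the convergents agree at s^n; use the depth 2n+1. *)
rewrite (cf_stable qvar 1 (d2 := n.*2.+1) hN) //; last by lia.
rewrite (cf_walk_weight n (ltn0Sn n) (step_weight_up qg)
  (step_weight_down qg) (step_weight_level qg) (@step_weight_far _ qvar) (ltnSn n)).
case: n {hN} => [|m]; first by rewrite htilde0.
by rewrite htilde_walks // sum_walks.
Qed.
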